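(* Let $a$ and $b$ be two disjoint finite groups of instances, each instance carrying a binary label, and let $\mathrm{p}^a$ and $\mathrm{p}^b$ be fixed orderings of the instances of $a$ and of $b$, respectively. Assume $n_1^a,n_0^a,n_1^b,n_0^b\ge 1$. Then: (i) there exists a cross-group ordering $o$ of $(\mathrm{p}^a,\mathrm{p}^b)$ with $\Delta\mathrm{URF}^o \le \min(1/n^a,\,1/n^b)$; (ii) there exists a cross-group ordering $o$ with $\Delta\mathrm{xAUC}^o \le \min\big(\max(1/n_1^b,1/n_0^b),\ \max(1/n_1^a,1/n_0^a)\big)$; (iii) there exists a cross-group ordering $o$ with $\Delta\mathrm{PRF}^o \le \min\big(\max(n_0^b/(n_1^a n_0),\,1/n_0),\ \max(n_0^a/(n_1^b n_0),\,1/n_0)\big)$.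
   Context: Each instance $u$ has a label $Y_u\in\{0,1\}$. For a group $g\in\{a,b\}$: $n^g$ is the number of instances in $g$, $n^g_1$ the number with label 1, $n^g_0$ the number with label 0; $n_1=n_1^a+n_1^b$, $n_0=n_0^a+n_0^b$. A cross-group ordering $o$ of $(\mathrm{p}^a,\mathrm{p}^b)$ is a total order (a list) of all instances of $a\cup b$ in which the instances of $a$ appear in the same relative order as in $\mathrm{p}^a$ and the instances of $b$ in the same relative order as in $\mathrm{p}^b$. ''$u$ precedes $v$ in $o$'' means $u$ is ranked above $v$. Metrics induced by $o$: $\mathrm{xAUC}^o(a,b)=\frac{1}{n_1^a n_0^b}\#\{(u,v): u\in a, Y_u=1, v\in b, Y_v=0, u \text{ precedes } v\}$, and $\mathrm{xAUC}^o(b,a)$ symmetrically; $\Delta\mathrm{xAUC}^o=|\mathrm{xAUC}^o(a,b)-\mathrm{xAUC}^o(b,a)|$. $\Delta\mathrm{URF}^o=\frac{1}{n^a n^b}\big|\#\{(u,v):u\in a,v\in b,u\text{ precedes }v\}-\#\{(u,v):u\in a,v\in b,v\text{ precedes }u\}\big|$. $\mathrm{PRF}^o(a)=\frac{1}{n_1^a n_0}\#\{(u,v): u\in a, Y_u=1, Y_v=0, u\text{ precedes } v\}$ (with $v$ ranging over negatives of both groups), $\mathrm{PRF}^o(b)$ symmetrically; $\Delta\mathrm{PRF}^o=|\mathrm{PRF}^o(a)-\mathrm{PRF}^o(b)|$. *)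

From mathcomp Require Import all_boot all_order all_algebra.
Set Implicit Arguments. Unset Strict Implicit. Unset Printing Implicit Defensive.
Import Order.TTheory GRing.Theory Num.Theory.
Local Open Scope ring_scope.

Section Fairness.
Variable T : eqType.
Variable Y : T -> bool.    (* labels: Y u = true  <-> label 1 *)

Definition nn (s : seq T) : nat := size s.
Definition n1 (s : seq T) : nat := count Y s.
Definition n0 (s : seq T) : nat := count (predC Y) s.

Definition cross_ordering (pa pb o : seq T) : bool :=
  [&& perm_eq o (pa ++ pb), filter (mem pa) o == pa & filter (mem pb) o == pb].

(* u precedes v in o: u is ranked above (earlier in the list) v *)
Definition precedes (o : seq T) (u v : T) : bool := (index u o < index v o)%N.

Definition npairs (s t : seq T) (P : T -> T -> bool) : nat :=
  (\sum_(u <- s) \sum_(v <- t) P u v)%N.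

Variable R : realFieldType.

Definition xAUC (o pg ph : seq T) : R :=
  (npairs pg ph (fun u v => [&& Y u, ~~ Y v & precedes o u v]))%:R
  / ((n1 pg * n0 ph)%N)%:R.

Definition DxAUC (o pa pb : seq T) : R := `|xAUC o pa pb - xAUC o pb pa|.

Definition DURF (o pa pb : seq T) : R :=
  `|(npairs pa pb (fun u v => precedes o u v))%:R
    - (npairs pa pb (fun u v => precedes o v u))%:R| / ((nn pa * nn pb)%N)%:R.

Definition PRF (o pg pa pb : seq T) : R :=
  (npairs pg (pa ++ pb) (fun u v => [&& Y u, ~~ Y v & precedes o u v]))%:R
  / ((n1 pg * (n0 pa + n0 pb))%N)%:R.

Definition DPRF (o pa pb : seq T) : R := `|PRF o pa pa pb - PRF o pb pa pb|.

End Fairness.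

From mathcomp Require Import all_boot all_order all_algebra.
From mathcomp Require Import lra ring zify.
From Stdlib Require Import Relation_Operators.
Import Order.TTheory GRing.Theory Num.Theory.
Set Implicit Arguments. Unset Strict Implicit. Unset Printing Implicit Defensive.

(* Sweep from the ordering [pa ++ pb] (group a entirely above group b) to [pb ++ pa] by
   adjacent transpositions, each lifting an instance of b over an instance of a; every
   intermediate list is a cross-group ordering. A transposition of u and v only changes the
   relative order of u and v, so every pair count moves by at most one, and each of the three
   signed disparities moves by at most [1/c1 + 1/c2], its two normalising constants. Each
   disparity is nonnegative at [pa ++ pb] and nonpositive at [pb ++ pa], hence a discrete
   intermediate value argument gives an ordering where it lies within half a step of zero;
   the stated bounds then follow by comparing the constants. *)

Section Precedence.
Variable T : eqType.
Implicit Types (s t p r : seq T) (u v x y z : T).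

Lemma index_swap_other s t u v z : u \notin s -> v \notin s -> z != u -> z != v ->
  index z (s ++ v :: u :: t) = index z (s ++ u :: v :: t).
Proof.
by move=> us vs zu zv; rewrite !index_cat /= !(eq_sym _ z) (negbTE zu) (negbTE zv).
Qed.

Lemma index_swap_other_range s t u v z : u \notin s -> v \notin s -> z != u -> z != v ->
  (index z (s ++ u :: v :: t) < size s)%N \/ ((size s).+1 < index z (s ++ u :: v :: t))%N.
Proof.
move=> us vs zu zv; rewrite index_cat /= !(eq_sym _ z) (negbTE zu) (negbTE zv).
by case: ifP => [zs | _]; [left; rewrite index_mem | right; lia].
Qed.

Lemma precedes_swap s t u v x y : uniq (s ++ u :: v :: t) ->
  ~~ ((x == u) && (y == v)) -> ~~ ((x == v) && (y == u)) ->
  precedes (s ++ v :: u :: t) x y = precedes (s ++ u :: v :: t) x y.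
Proof.
rewrite cat_uniq /= !inE !negb_or => /and3P [_ /and3P [us vs _] /and3P [/andP [uv _] _ _]].
have [iu iv iu' iv'] : [/\ index u (s ++ u :: v :: t) = size s,
    index v (s ++ u :: v :: t) = (size s).+1, index u (s ++ v :: u :: t) = (size s).+1
  & index v (s ++ v :: u :: t) = size s].
  by rewrite !index_cat (negbTE us) (negbTE vs) /= [v == u]eq_sym (negbTE uv) !eqxx addn0 addn1.
(* The swap exchanges the indices [size s] and [(size s).+1] of [u] and [v] and fixes
   every other index, which lies outside that window. *)
rewrite /precedes.
case: (eqVneq x u) => [exu|xu]; case: (eqVneq x v) => [exv|xv];
case: (eqVneq y u) => [eyu|yu]; case: (eqVneq y v) => [eyv|yv]; subst=> //=;
rewrite ?eqxx ?andbT ?andbF //= => _ _;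
rewrite ?iu ?iv ?iu' ?iv';
try rewrite (index_swap_other t us vs xu xv);
try rewrite (index_swap_other t us vs yu yv);
try have := index_swap_other_range t us vs xu xv;
try have := index_swap_other_range t us vs yu yv; lia.
Qed.

Lemma precedes_cat p r x y : x \in p -> y \notin p -> precedes (p ++ r) x y.
Proof.
move=> xp yp; rewrite /precedes !index_cat xp (negbTE yp).
by apply: leq_trans (leq_addr _ _); rewrite index_mem.
Qed.

Lemma precedes_catN p r x y : x \in p -> y \notin p -> precedes (p ++ r) y x = false.
Proof.
move=> xp yp; have := precedes_cat r xp yp; rewrite /precedes => lt_xy.
by apply/negbTE; rewrite -leqNgt ltnW.
Qed.

Definition precedence_based (H : seq T -> T -> T -> bool) : Prop :=
  forall o o' x y, precedes o' x y = precedes o x y -> precedes o' y x = precedes o y x ->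
    H o' x y = H o x y.

End Precedence.

Section PairCounts.
Variable T : eqType.
Implicit Types (p q r : seq T) (u v : T) (H : T -> T -> bool).

Lemma npairs0 p q H :
  (forall x y, x \in p -> y \in q -> H x y = false) -> npairs p q H = 0%N.
Proof.
move=> H0; rewrite /npairs big_seq big1 // => x xp.
by rewrite big_seq big1 // => y yq; rewrite H0.
Qed.

Lemma npairs_cat p q r H : npairs p (q ++ r) H = (npairs p q H + npairs p r H)%N.
Proof. by rewrite /npairs -big_split; apply: eq_bigr => x _; rewrite big_cat. Qed.

Lemma npairs_andb (a b : pred T) p q :
  npairs p q (fun x y => a x && b y) = (count a p * count b q)%N.
Proof.
rewrite /npairs -!sum1_count big_distrl [RHS]big_mkcond /=; apply: eq_bigr => x _.
case: (a x); last by rewrite big1.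
by rewrite mul1n [RHS]big_mkcond; apply: eq_bigr => y _; case: (b y).
Qed.

Lemma leq_npairs_off_pair p q u v H H' :
  (forall x y, ~~ ((x == u) && (y == v)) -> ~~ ((x == v) && (y == u)) -> H' x y = H x y) ->
  (npairs p q H' <= npairs p q H
     + (count_mem u p * count_mem v q + count_mem v p * count_mem u q))%N.
Proof.
move=> eqH; rewrite addnA -!npairs_andb /npairs -!big_split /=.
apply: leq_sum => x _; rewrite -!big_split /=; apply: leq_sum => y _.
move: (eqH x y); case: (x == u) (y == v) (x == v) (y == u) => [] [] [] [] //=;
  by [move=> /(_ isT isT) ->; rewrite !addn0 | move=> _; case: (H' x y); case: (H x y)].
Qed.

Lemma count_off_pair_le1 p q u v : uniq p -> uniq q -> (u \notin p) || (v \notin p) ->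
  (count_mem u p * count_mem v q + count_mem v p * count_mem u q <= 1)%N.
Proof.
move=> up uq; rewrite !count_uniq_mem //.
by case/orP=> /negbTE ->; rewrite mul0n ?add0n ?addn0 mulnb leq_b1.
Qed.

End PairCounts.

Local Open Scope ring_scope.

Lemma discrete_ivt (R : realFieldType) (A : Type) (r : A -> A -> Prop) (P : A -> Prop)
    (g : A -> R) (d : R) :
  0 <= d -> (forall x y, P x -> r x y -> P y /\ `|g y - g x| <= d) ->
  forall x z, clos_refl_trans A r x z -> P x -> 0 <= g x -> g z <= 0 ->
  exists y, P y /\ `|g y| <= d / 2.
Proof.
move=> d_ge0 step.
have reach_P x y : clos_refl_trans A r x y -> P x -> P y.
  elim=> {x y} [x y rxy Px | // | x y z _ Pxy _ Pyz /Pxy /Pyz //].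
  exact: (step x y Px rxy).1.
move=> x z; elim=> {x z} [x y rxy | x | x y z xy IHxy _ IHyz] Px gx_ge0 gz_le0.
- have [Py] := step x y Px rxy; rewrite ler_norml => /andP [lo hi].
  have [gx_small | gx_big] := lerP (g x) (d / 2).
    by exists x; split; rewrite // ler_norml; apply/andP; split; lra.
  by exists y; split; rewrite // ler_norml; apply/andP; split; lra.
- exists x; split => //.
  have -> : g x = 0 by apply/eqP; rewrite eq_le gz_le0 gx_ge0.
  by rewrite normr0 divr_ge0.
- have [gy_le0 | gy_gt0] := lerP (g y) 0; first exact: IHxy.
  exact: IHyz (reach_P _ _ xy Px) (ltW gy_gt0) gz_le0.
Qed.

Section Sweep.
Variables (R : realFieldType) (T : eqType).

Lemma npairs_swap_dist (p q s t : seq T) (u v : T) (H : seq T -> T -> T -> bool) :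
  precedence_based H -> uniq (s ++ u :: v :: t) -> uniq p -> uniq q ->
  (u \notin p) || (v \notin p) ->
  `|(npairs p q (H (s ++ v :: u :: t)))%:R - (npairs p q (H (s ++ u :: v :: t)))%:R| <= 1 :> R.
Proof.
move=> Hbased uo up uq uvp.
have off_pair x y : ~~ ((x == u) && (y == v)) -> ~~ ((x == v) && (y == u)) ->
    H (s ++ v :: u :: t) x y = H (s ++ u :: v :: t) x y.
  move=> xy_uv xy_vu; apply: Hbased; first exact: precedes_swap.
  by apply: precedes_swap; rewrite // andbC.
have c_le1 := count_off_pair_le1 up uq uvp.
have le1 := leq_npairs_off_pair p q off_pair.
have le2 := leq_npairs_off_pair p q (fun x y h1 h2 => esym (off_pair x y h1 h2)).
move: (leq_trans le1 (leq_add (leqnn _) c_le1)) (leq_trans le2 (leq_add (leqnn _) c_le1)).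
rewrite -!(ler_nat R) !natrD ler_norml => ? ?; apply/andP; split; lra.
Qed.

Variables (pa pb : seq T).
Hypotheses (uniq_pa : uniq pa) (uniq_pb : uniq pb) (disj : ~~ has (mem pb) pa).

Definition ab_swap (o o' : seq T) : Prop :=
  exists s t u v, [/\ o = s ++ u :: v :: t, o' = s ++ v :: u :: t, u \in pa & v \in pb].

Lemma notin_pb x : x \in pa -> x \notin pb.
Proof. exact: hasPn disj x. Qed.

Lemma notin_pa x : x \in pb -> x \notin pa.
Proof. by apply: contraL => /notin_pb. Qed.

Lemma cross_ordering_cat : cross_ordering pa pb (pa ++ pb).
Proof.
have fba : filter (mem pb) pa = [::] by apply/eqP; rewrite -[_ == _]negbK -has_filter.
have fab : filter (mem pa) pb = [::].
  by apply/eqP; rewrite -[_ == _]negbK -has_filter has_sym.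
apply/and3P; split=> //; rewrite filter_cat ?fab ?fba ?cats0 //=.
- exact/eqP/all_filterP/allss.
- exact/eqP/all_filterP/allss.
Qed.

Lemma cross_ordering_ab_swap o o' :
  cross_ordering pa pb o -> ab_swap o o' -> cross_ordering pa pb o'.
Proof.
move=> /and3P [perm_o fa fb] [s [t [u [v [eo -> ua vb]]]]]; subst o.
apply/and3P; split.
- apply: perm_trans perm_o; rewrite perm_cat2l.
  rewrite -[v :: u :: t]/([:: v; u] ++ t) -[u :: v :: t]/([:: u; v] ++ t) perm_cat2r.
  by rewrite -[[:: v; u]]/([:: v] ++ [:: u]) perm_catC.
- by move: fa; rewrite !filter_cat /= ua (negbTE (notin_pa vb)).
- by move: fb; rewrite !filter_cat /= vb (negbTE (notin_pb ua)).
Qed.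

Lemma ab_swaps_move s a v t : all (mem pa) a -> v \in pb ->
  clos_refl_trans _ ab_swap (s ++ a ++ v :: t) (s ++ v :: a ++ t).
Proof.
elim: a s => [|x a IHa] s /=; first by move=> _ _; apply: rt_refl.
move=> /andP [xa aa] vb.
apply: (rt_trans _ _ _ (s ++ x :: v :: a ++ t)).
  by have := IHa (rcons s x) aa vb; rewrite !cat_rcons.
by apply: rt_step; exists s, (a ++ t), x, v.
Qed.

Lemma ab_swaps_blocks s a b : all (mem pa) a -> all (mem pb) b ->
  clos_refl_trans _ ab_swap (s ++ a ++ b) (s ++ b ++ a).
Proof.
elim: b s => [|v b IHb] s aa /=; first by rewrite cats0 => _; apply: rt_refl.
move=> /andP [vb bb]; apply: (rt_trans _ _ _ (s ++ v :: a ++ b)).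
  exact: ab_swaps_move.
by have := IHb (rcons s v) aa bb; rewrite !cat_rcons.
Qed.

Lemma npairs_ab_swap_dist p q H o o' : p \in [:: pa; pb] -> uniq q -> precedence_based H ->
  cross_ordering pa pb o -> ab_swap o o' ->
  `|(npairs p q (H o'))%:R - (npairs p q (H o))%:R| <= 1 :> R.
Proof.
move=> p_ab uq Hbased co [s [t [u [v [eo -> ua vb]]]]].
have uo : uniq o.
  case/and3P: co => perm_o _ _; rewrite (perm_uniq perm_o) cat_uniq uniq_pa uniq_pb.
  by rewrite has_sym disj.
rewrite eo in uo *; apply: npairs_swap_dist => //.
  by move: p_ab; rewrite !inE => /orP [] /eqP ->.
by move: p_ab; rewrite !inE => /orP [] /eqP ->; rewrite ?(notin_pa vb) ?(notin_pb ua) ?orbT.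
Qed.

Lemma exists_balanced_ordering (p1 q1 p2 q2 : seq T) (H1 H2 : seq T -> T -> T -> bool)
    (c1 c2 : R) :
  p1 \in [:: pa; pb] -> p2 \in [:: pa; pb] -> uniq q1 -> uniq q2 ->
  precedence_based H1 -> precedence_based H2 -> 0 < c1 -> 0 < c2 ->
  let g o := (npairs p1 q1 (H1 o))%:R / c1 - (npairs p2 q2 (H2 o))%:R / c2 in
  0 <= g (pa ++ pb) -> g (pb ++ pa) <= 0 ->
  exists o, cross_ordering pa pb o /\ `|g o| <= (1 / c1 + 1 / c2) / 2.
Proof.
move=> p1_ab p2_ab uq1 uq2 H1b H2b c1_gt0 c2_gt0 g.
apply: (discrete_ivt _ _ (ab_swaps_blocks [::] (allss pa) (allss pb)) cross_ordering_cat).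
  by rewrite !div1r addr_ge0 // invr_ge0 ltW.
move=> o o' co sw; split; first exact: cross_ordering_ab_swap co sw.
have -> : g o' - g o =
    ((npairs p1 q1 (H1 o'))%:R - (npairs p1 q1 (H1 o))%:R) / c1
  - ((npairs p2 q2 (H2 o'))%:R - (npairs p2 q2 (H2 o))%:R) / c2 by rewrite /g; ring.
apply: le_trans (ler_normB _ _) _.
rewrite !div1r !normrM !normfV (gtr0_norm c1_gt0) (gtr0_norm c2_gt0).
by apply: lerD; apply: ler_piMl; rewrite ?invr_ge0 ?(ltW c1_gt0) ?(ltW c2_gt0) //;
  exact: npairs_ab_swap_dist.
Qed.

End Sweep.

Section Counts.
Variables (T : eqType) (Y : T -> bool).
Implicit Types (p q r : seq T) (H : T -> T -> bool).

Definition pos_before_neg (o : seq T) (u v : T) : bool := [&& Y u, ~~ Y v & precedes o u v].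

Lemma pos_before_neg_based : precedence_based pos_before_neg.
Proof. by move=> o o' x y; rewrite /pos_before_neg => ->. Qed.

Lemma eq_in_npairs p q H H' :
  (forall x y, x \in p -> y \in q -> H x y = H' x y) -> npairs p q H = npairs p q H'.
Proof.
move=> eqH; rewrite /npairs !big_seq; apply: eq_bigr => x xp.
by rewrite !big_seq; apply: eq_bigr => y yq; rewrite eqH.
Qed.

Lemma perm_npairs p q q' H : perm_eq q q' -> npairs p q H = npairs p q' H.
Proof. by move=> qq'; apply: eq_bigr => x _; apply: perm_big. Qed.

Lemma leq_npairs_pos_neg p q o : (npairs p q (pos_before_neg o) <= n1 Y p * n0 Y q)%N.
Proof.
rewrite -npairs_andb; apply: leq_sum => x _; apply: leq_sum => y _.
by rewrite /pos_before_neg /=; case: (Y x) (Y y) (precedes o x y) => [] [] [].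
Qed.

Lemma npairs_front_pos_neg p r : ~~ has (mem r) p ->
  npairs p r (pos_before_neg (p ++ r)) = (n1 Y p * n0 Y r)%N.
Proof.
rewrite has_sym => disj; rewrite -npairs_andb; apply: eq_in_npairs => x y xp yr.
by rewrite /pos_before_neg precedes_cat ?andbT //; apply: (hasPn disj).
Qed.

Lemma npairs_back_pos_neg p r : ~~ has (mem r) p ->
  npairs r p (pos_before_neg (p ++ r)) = 0%N.
Proof.
rewrite has_sym => disj; apply: npairs0 => x y xr yp.
by rewrite /pos_before_neg precedes_catN ?andbF //; apply: (hasPn disj).
Qed.

End Counts.

Lemma ler_inv_nat (R : realFieldType) (m n : nat) :
  (0 < m)%N -> (m <= n)%N -> 1 / n%:R <= 1 / m%:R :> R.
Proof.
move=> m_gt0 mn; rewrite !div1r lef_pV2 ?ler_nat // posrE ltr0n //.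
exact: leq_trans mn.
Qed.

Lemma natr_divMl (R : realFieldType) (m k n : nat) :
  (0 < m)%N -> (m * k)%:R / (m * n)%:R = k%:R / n%:R :> R.
Proof. by move=> m_gt0; rewrite !natrM -mulf_div divff ?mul1r // pnatr_eq0 -lt0n. Qed.

Lemma midf_le_max (R : realFieldType) (x y : R) : (x + y) / 2 <= Num.max x y.
Proof. by rewrite maxr_absE ler_pM2r ?invr_gt0 ?ltr0n // lerDl. Qed.

Section Proposition1.
Variables (R : realFieldType) (T : eqType) (Y : T -> bool) (pa pb : seq T).
Hypotheses (uniq_pa : uniq pa) (uniq_pb : uniq pb) (disj : ~~ has (mem pb) pa).
Hypotheses (h1a : (0 < n1 Y pa)%N) (h0a : (0 < n0 Y pa)%N).
Hypotheses (h1b : (0 < n1 Y pb)%N) (h0b : (0 < n0 Y pb)%N).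

Let disj_ba : ~~ has (mem pa) pb. Proof. by rewrite has_sym. Qed.

Lemma PRF_front_ge p r : perm_eq (p ++ r) (pa ++ pb) -> ~~ has (mem r) p -> (0 < n1 Y p)%N ->
  (n0 Y r)%:R / (n0 Y pa + n0 Y pb)%:R <= PRF Y R (p ++ r) p pa pb.
Proof.
move=> perm_pr disj_pr n1p_gt0.
rewrite /PRF -(perm_npairs _ _ perm_pr) npairs_cat.
rewrite (npairs_front_pos_neg Y disj_pr) -(natr_divMl R (n0 Y r) _ n1p_gt0).
by apply: ler_wpM2r; rewrite ?invr_ge0 ?ler0n // ler_nat leq_addl.
Qed.

Lemma PRF_back_le p r : perm_eq (p ++ r) (pa ++ pb) -> ~~ has (mem r) p -> (0 < n1 Y r)%N ->
  PRF Y R (p ++ r) r pa pb <= (n0 Y r)%:R / (n0 Y pa + n0 Y pb)%:R.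
Proof.
move=> perm_pr disj_pr n1r_gt0.
rewrite /PRF -(perm_npairs _ _ perm_pr) npairs_cat.
rewrite (npairs_back_pos_neg Y disj_pr) add0n -(natr_divMl R (n0 Y r) _ n1r_gt0).
by apply: ler_wpM2r; rewrite ?invr_ge0 ?ler0n // ler_nat leq_npairs_pos_neg.
Qed.

Lemma exists_ordering_DURF_le : exists o, cross_ordering pa pb o /\
  DURF R o pa pb <= Num.min (1 / (nn pa)%:R) (1 / (nn pb)%:R).
Proof.
have na_gt0 : (0 < nn pa)%N := leq_trans h1a (count_size _ _).
have nb_gt0 : (0 < nn pb)%N := leq_trans h1b (count_size _ _).
have [o [co bal]] : exists o, cross_ordering pa pb o /\
    `|(npairs pa pb (fun u v => precedes o u v))%:R / 1
      - (npairs pa pb (fun u v => precedes o v u))%:R / 1| <= (1 / 1 + 1 / 1) / 2 :> R.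
  apply: (exists_balanced_ordering uniq_pa uniq_pb disj) => //; try exact: mem_head.
  - have -> : npairs pa pb (fun u v => precedes (pa ++ pb) v u) = 0%N.
      by apply: npairs0 => x y xa yb; rewrite (precedes_catN _ xa (hasPn disj_ba y yb)).
    by rewrite mul0r subr0 divr1 ler0n.
  - have -> : npairs pa pb (fun u v => precedes (pb ++ pa) u v) = 0%N.
      by apply: npairs0 => x y xa yb; rewrite (precedes_catN _ yb (hasPn disj x xa)).
    by rewrite mul0r sub0r oppr_le0 divr1 ler0n.
exists o; split=> //.
move: bal; rewrite !divr1 -[1 + 1 : R]/(2%:R) divff ?pnatr_eq0 // => bal.
rewrite /DURF le_min; apply/andP; split; apply: le_trans (ler_wpM2r _ bal) _;
  rewrite ?invr_ge0 ?ler0n // ler_inv_nat ?muln_gt0 ?na_gt0 //.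
- exact: leq_pmulr.
- exact: leq_pmull.
Qed.

Lemma exists_ordering_DxAUC_le : exists o, cross_ordering pa pb o /\
  DxAUC Y R o pa pb <=
    Num.min (Num.max (1 / (n1 Y pb)%:R) (1 / (n0 Y pb)%:R))
            (Num.max (1 / (n1 Y pa)%:R) (1 / (n0 Y pa)%:R)).
Proof.
have c1_gt0 : (0 < n1 Y pa * n0 Y pb)%N by rewrite muln_gt0 h1a h0b.
have c2_gt0 : (0 < n1 Y pb * n0 Y pa)%N by rewrite muln_gt0 h1b h0a.
have [o [co bal]] : exists o, cross_ordering pa pb o /\ DxAUC Y R o pa pb <=
    (1 / (n1 Y pa * n0 Y pb)%:R + 1 / (n1 Y pb * n0 Y pa)%:R) / 2.
  apply: (exists_balanced_ordering uniq_pa uniq_pb disj (H1 := pos_before_neg Y)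
    (H2 := pos_before_neg Y)) => //; rewrite ?inE ?eqxx ?orbT ?ltr0n //;
    try exact: pos_before_neg_based.
  - by rewrite (npairs_back_pos_neg Y disj) mul0r subr0 divr_ge0.
  - by rewrite (npairs_back_pos_neg Y disj_ba) mul0r sub0r oppr_le0 divr_ge0.
exists o; split=> //; apply: le_trans bal (le_trans (midf_le_max _ _) _).
rewrite le_min [X in _ <= X]maxC !le_max2 //; apply: ler_inv_nat => //.
- exact: leq_pmulr h0b.
- exact: leq_pmull h1b.
- exact: leq_pmull h1a.
- exact: leq_pmulr h0a.
Qed.

Lemma exists_ordering_DPRF_le : exists o, cross_ordering pa pb o /\
  DPRF Y R o pa pb <=
    Num.min (Num.max ((n0 Y pb)%:R / (n1 Y pa * (n0 Y pa + n0 Y pb))%:R)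
                     (1 / (n0 Y pa + n0 Y pb)%:R))
            (Num.max ((n0 Y pa)%:R / (n1 Y pb * (n0 Y pa + n0 Y pb))%:R)
                     (1 / (n0 Y pa + n0 Y pb)%:R)).
Proof.
have uniq_ab : uniq (pa ++ pb) by rewrite cat_uniq uniq_pa uniq_pb disj_ba.
have n0_gt0 : (0 < n0 Y pa + n0 Y pb)%N by rewrite addn_gt0 h0a.
have [o [co bal]] : exists o, cross_ordering pa pb o /\ DPRF Y R o pa pb <=
    (1 / (n1 Y pa * (n0 Y pa + n0 Y pb))%:R + 1 / (n1 Y pb * (n0 Y pa + n0 Y pb))%:R) / 2.
  apply: (exists_balanced_ordering uniq_pa uniq_pb disj (H1 := pos_before_neg Y)
    (H2 := pos_before_neg Y)) => //; rewrite ?inE ?eqxx ?orbT ?ltr0n ?muln_gt0 ?h1a ?h1b //;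
    try exact: pos_before_neg_based.
  - rewrite subr_ge0; apply: le_trans (PRF_front_ge (perm_refl _) disj h1a).
    exact: PRF_back_le (perm_refl _) disj h1b.
  - rewrite subr_le0; apply: le_trans (PRF_front_ge _ disj_ba h1b); last by rewrite perm_catC.
    by apply: PRF_back_le disj_ba h1a; rewrite perm_catC.
exists o; split=> //; apply: le_trans bal (le_trans (midf_le_max _ _) _).
have n0_le : Num.max (1 / (n1 Y pa * (n0 Y pa + n0 Y pb))%:R)
                     (1 / (n1 Y pb * (n0 Y pa + n0 Y pb))%:R) <= 1 / (n0 Y pa + n0 Y pb)%:R :> R.
  by rewrite ge_max !ler_inv_nat ?leq_pmull ?muln_gt0 ?h1a ?h1b.
by rewrite le_min !le_max n0_le !orbT.
Qed.

End Proposition1.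

Theorem proposition1 (R : realFieldType) (T : eqType) (Y : T -> bool)
  (pa pb : seq T)
  (uniq_pa : uniq pa) (uniq_pb : uniq pb)
  (disj : ~~ has (mem pb) pa)
  (h1a : (0 < n1 Y pa)%N) (h0a : (0 < n0 Y pa)%N)
  (h1b : (0 < n1 Y pb)%N) (h0b : (0 < n0 Y pb)%N) :
  let n0_ := (n0 Y pa + n0 Y pb)%N in
  [/\ (exists o, cross_ordering pa pb o /\
        DURF R o pa pb <= Num.min (1 / (nn pa)%:R) (1 / (nn pb)%:R)),
      (exists o, cross_ordering pa pb o /\
        DxAUC Y R o pa pb <=
          Num.min (Num.max (1 / (n1 Y pb)%:R) (1 / (n0 Y pb)%:R))
                  (Num.max (1 / (n1 Y pa)%:R) (1 / (n0 Y pa)%:R)))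
    & (exists o, cross_ordering pa pb o /\
        DPRF Y R o pa pb <=
          Num.min (Num.max ((n0 Y pb)%:R / ((n1 Y pa * n0_)%N)%:R) (1 / n0_%:R))
                  (Num.max ((n0 Y pa)%:R / ((n1 Y pb * n0_)%N)%:R) (1 / n0_%:R)))].
Proof.
split.
- exact: exists_ordering_DURF_le h1a h1b.
- exact: exists_ordering_DxAUC_le.
- exact: exists_ordering_DPRF_le.
Qed.
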